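(* Let $(H,\mu_H,\Delta_H,\alpha_H)$ be a Hom-bialgebra and $(A,\mu_A,\alpha_A)$ a left $H$-module Hom-algebra with action $h\otimes a\mapsto h\cdot a$, with $\alpha_H,\alpha_A$ bijective. Then the Hom-smash product $A\# H$ is a right $H$-comodule Hom-algebra via $\rho_{A\# H}:A\# H\to(A\# H)\otimes H$, $\rho_{A\# H}(a\# h)=(\alpha_A(a)\# h_1)\otimes h_2$.
   Context: Over a field $k$, no (co)units assumed; $\Delta(h)=h_1\otimes h_2$. A Hom-associative algebra is $(A,\mu,\alpha)$ with $\alpha(aa')=\alpha(a)\alpha(a')$, $\alpha(a)(a'a'')=(aa')\alpha(a'')$; a morphism $f$ of Hom-associative algebras satisfies $\alpha_B\circ f=f\circ\alpha_A$, $f\circ\mu_A=\mu_B\circ(f\otimes f)$; the tensor product of Hom-associative algebras has componentwise product and structure map. A Hom-bialgebra $(H,\mu,\Delta,\alpha)$: $(H,\mu,\alpha)$ Hom-associative, $\Delta(h_1)\otimes\alpha(h_2)=\alpha(h_1)\otimes\Delta(h_2)$, $\Delta(hh')=h_1h'_1\otimes h_2h'_2$, $\Delta(\alpha(h))=\alpha(h_1)\otimes\alpha(h_2)$. A left $H$-module Hom-algebra is a Hom-associative $(A,\mu_A,\alpha_A)$ with action satisfying $\alpha_A(h\cdot a)=\alpha_H(h)\cdot\alpha_A(a)$, $\alpha_H(h)\cdot(h'\cdot a)=(hh')\cdot\alpha_A(a)$, $\alpha_H^2(h)\cdot(aa')=(h_1\cdot a)(h_2\cdot a')$. The Hom-smash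 product $A\# H$ is $A\otimes H$ with structure map $\alpha_A\otimes\alpha_H$ and product $(a\# h)(a'\# h')=a(\alpha_H^{-2}(h_1)\cdot\alpha_A^{-1}(a'))\#\alpha_H^{-1}(h_2)h'$, a Hom-associative algebra. A right $H$-comodule structure on $(M,\alpha_M)$ is a linear $\rho:M\to M\otimes H$ with $(\alpha_M\otimes\alpha_H)\circ\rho=\rho\circ\alpha_M$ and $(\alpha_M\otimes\Delta_H)\circ\rho=(\rho\otimes\alpha_H)\circ\rho$. A right $H$-comodule Hom-algebra is a Hom-associative algebra $(D,\mu_D,\alpha_D)$ with a right $H$-comodule structure $\rho_D:D\to D\otimes H$ that is a morphism of Hom-associative algebras (to the tensor product $D\otimes H$). *)

From mathcomp Require Import all_boot all_algebra.
Set Implicit Arguments. Unset Strict Implicit. Unset Printing Implicit Defensive.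
Import GRing.Theory.
Local Open Scope ring_scope.

(* Elements of an algebraic tensor product U (x) V (x) ... over a field k are
   represented by finite lists of elementary tensors (formal sums); two lists
   denote the same tensor iff every multilinear map (into any k-vector space)
   takes the same value on them -- the universal property of the tensor
   product.  Everything is linear over k; no units/counits. *)

Section HomDefs.
Variable k : fieldType.

Definition klinear (U V : lmodType k) (f : U -> V) :=
  forall (c : k) x y, f (c *: x + y) = c *: f x + f y.

Definition bilin (U V W : lmodType k) (f : U -> V -> W) :=
  (forall v, klinear (fun u => f u v)) /\ (forall u, klinear (f u)).

Definition trilin (U V X W : lmodType k) (f : U -> V -> X -> W) :=
  [/\ forall v x, klinear (fun u => f u v x),
      forall u x, klinear (fun v => f u v x) &
      forall u v, klinear (f u v)].

Definition quadrilin (U V X Y W : lmodType k) (f : U -> V -> X -> Y -> W) :=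
  [/\ forall v x y, klinear (fun u => f u v x y),
      forall u x y, klinear (fun v => f u v x y),
      forall u v y, klinear (fun x => f u v x y) &
      forall u v x, klinear (f u v x)].

Definition teq2 (U V : lmodType k) (s t : seq (U * V)) :=
  forall (W : lmodType k) (f : U -> V -> W), bilin f ->
    \sum_(p <- s) f p.1 p.2 = \sum_(p <- t) f p.1 p.2.

Definition teq3 (U V X : lmodType k) (s t : seq (U * V * X)) :=
  forall (W : lmodType k) (f : U -> V -> X -> W), trilin f ->
    \sum_(p <- s) f p.1.1 p.1.2 p.2 = \sum_(p <- t) f p.1.1 p.1.2 p.2.

Definition teq4 (U V X Y : lmodType k) (s t : seq (U * V * X * Y)) :=
  forall (W : lmodType k) (f : U -> V -> X -> Y -> W), quadrilin f ->
    \sum_(p <- s) f p.1.1.1 p.1.1.2 p.1.2 p.2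
    = \sum_(p <- t) f p.1.1.1 p.1.1.2 p.1.2 p.2.

Definition scale2 (U V : lmodType k) (c : k) (s : seq (U * V)) :=
  [seq (c *: p.1, p.2) | p <- s].
Definition scale3 (U V X : lmodType k) (c : k) (s : seq (U * V * X)) :=
  [seq ((c *: p.1.1, p.1.2), p.2) | p <- s].

Definition hom_assoc (A : lmodType k) (mu : A -> A -> A) (alpha : A -> A) :=
  [/\ bilin mu, klinear alpha,
      forall a a', alpha (mu a a') = mu (alpha a) (alpha a') &
      forall a a' a'', mu (alpha a) (mu a' a'') = mu (mu a a') (alpha a'')].

(* Hom-bialgebra (H, mu, Delta, alpha); Delta h is a representative of
   h_1 (x) h_2 in H (x) H *)
Definition hom_bialgebra (H : lmodType k) (mu : H -> H -> H)
    (Delta : H -> seq (H * H)) (alpha : H -> H) :=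
  [/\ hom_assoc mu alpha,
      forall (c : k) x y, teq2 (Delta (c *: x + y)) (scale2 c (Delta x) ++ Delta y),
      forall h, teq3 [seq ((q.1, q.2), alpha p.2) | p <- Delta h, q <- Delta p.1]
                     [seq ((alpha p.1, q.1), q.2) | p <- Delta h, q <- Delta p.2],
      forall h h', teq2 (Delta (mu h h'))
                        [seq (mu p.1 q.1, mu p.2 q.2) | p <- Delta h, q <- Delta h'] &
      forall h, teq2 (Delta (alpha h)) [seq (alpha p.1, alpha p.2) | p <- Delta h]].

Definition module_hom_algebra (H : lmodType k) (muH : H -> H -> H)
    (Delta : H -> seq (H * H)) (alphaH : H -> H)
    (A : lmodType k) (muA : A -> A -> A) (alphaA : A -> A) (act : H -> A -> A) :=
  [/\ hom_assoc muA alphaA, bilin act,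
      forall h a, alphaA (act h a) = act (alphaH h) (alphaA a),
      forall h h' a, act (alphaH h) (act h' a) = act (muH h h') (alphaA a) &
      forall h a a', act (alphaH (alphaH h)) (muA a a')
                     = \sum_(p <- Delta h) muA (act p.1 a) (act p.2 a')].

Section Smash.
Variables (H A : lmodType k) (muH : H -> H -> H) (Delta : H -> seq (H * H))
  (alphaH : H -> H) (muA : A -> A -> A) (alphaA : A -> A) (act : H -> A -> A)
  (invH : H -> H) (invA : A -> A).

(* (a # h)(a' # h') = a (alpha_H^{-2}(h_1) . alpha_A^{-1}(a')) # alpha_H^{-1}(h_2) h' *)
Definition smash_mul_pure (x y : A * H) : seq (A * H) :=
  [seq (muA x.1 (act (invH (invH p.1)) (invA y.1)), muH (invH p.2) y.2)
  | p <- Delta x.2].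

Definition smash_mul (x y : seq (A * H)) : seq (A * H) :=
  flatten [seq smash_mul_pure p q | p <- x, q <- y].

Definition smash_alpha (x : seq (A * H)) : seq (A * H) :=
  [seq (alphaA p.1, alphaH p.2) | p <- x].

Definition smash_rho (x : seq (A * H)) : seq (A * H * H) :=
  [seq ((alphaA p.1, q.1), q.2) | p <- x, q <- Delta p.2].

Definition tens_alpha (z : seq (A * H * H)) : seq (A * H * H) :=
  [seq ((alphaA t.1.1, alphaH t.1.2), alphaH t.2) | t <- z].

Definition tens_mul (z w : seq (A * H * H)) : seq (A * H * H) :=
  flatten [seq [seq (r, muH t.2 u.2) | r <- smash_mul_pure t.1 u.1] | t <- z, u <- w].

Definition coass_lhs (x : seq (A * H)) : seq (A * H * H * H) :=
  [seq (((alphaA t.1.1, alphaH t.1.2), q.1), q.2) | t <- smash_rho x, q <- Delta t.2].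

Definition coass_rhs (x : seq (A * H)) : seq (A * H * H * H) :=
  [seq (r, alphaH t.2) | t <- smash_rho x, r <- smash_rho [:: t.1]].

End Smash.
End HomDefs.

From mathcomp Require Import all_boot all_algebra.
Set Implicit Arguments. Unset Strict Implicit. Unset Printing Implicit Defensive.
Import GRing.Theory.
Local Open Scope ring_scope.

(* Testing against multilinear maps reduces everything to pure tensors a # h.
   Linearity and alpha-compatibility of rho come from those of Delta, and its
   coassociativity is the Hom-coassociativity of Delta at h.  For
   multiplicativity, Delta(alpha_H^{-1}(h_2) h') = alpha_H^{-1}(h_21) h'_1 (x)
   alpha_H^{-1}(h_22) h'_2 turns rho((a # h)(a' # h')) into a trilinear
   function G of alpha_H(h_1) (x) h_21 (x) h_22, while rho(a # h) rho(a' # h')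
   is G of h_11 (x) h_12 (x) alpha_H(h_2); the two agree by
   Hom-coassociativity. *)

Section Multilinear.
Variable k : fieldType.
Implicit Types U V X Y W : lmodType k.

Lemma klinear0 U V (f : U -> V) : klinear f -> f 0 = 0.
Proof.
move=> lf; have := lf 1 0 0; rewrite !scale1r addr0 => f0.
by apply: (addIr (f 0)); rewrite add0r -f0.
Qed.

Lemma klinearZ U V (f : U -> V) c x : klinear f -> f (c *: x) = c *: f x.
Proof. by move=> lf; have := lf c x 0; rewrite !addr0 (klinear0 lf) addr0. Qed.

Lemma can_klinear U (f g : U -> U) :
  klinear f -> cancel f g -> cancel g f -> klinear g.
Proof. by move=> lf fK gK c x y; apply: (can_inj fK); rewrite lf !gK. Qed.

Lemma bilinl U V W (f : U -> V -> W) c x y v : bilin f ->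
  f (c *: x + y) v = c *: f x v + f y v.
Proof. by case=> lin _; exact: lin. Qed.

Lemma bilinr U V W (f : U -> V -> W) c x y u : bilin f ->
  f u (c *: x + y) = c *: f u x + f u y.
Proof. by case=> _ lin; exact: lin. Qed.

Lemma trilin1 U V X W (f : U -> V -> X -> W) c x y v w : trilin f ->
  f (c *: x + y) v w = c *: f x v w + f y v w.
Proof. by case=> lin _ _; exact: lin. Qed.

Lemma trilin2 U V X W (f : U -> V -> X -> W) c x y u w : trilin f ->
  f u (c *: x + y) w = c *: f u x w + f u y w.
Proof. by case=> _ lin _; exact: lin. Qed.

Lemma trilin3 U V X W (f : U -> V -> X -> W) c x y u v : trilin f ->
  f u v (c *: x + y) = c *: f u v x + f u v y.
Proof. by case=> _ _ lin; exact: lin. Qed.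

Lemma trilin_bilin U V X W (f : U -> V -> X -> W) u : trilin f -> bilin (f u).
Proof. by case=> _ lin2 lin3; split=> *; [exact: lin2 | exact: lin3]. Qed.

Lemma quadrilin_trilin U V X Y W (f : U -> V -> X -> Y -> W) u :
  quadrilin f -> trilin (f u).
Proof.
by case=> _ lin2 lin3 lin4; split=> *; [exact: lin2 | exact: lin3 | exact: lin4].
Qed.

Lemma big_scaleD W I (s : seq I) (F G : I -> W) c :
  \sum_(i <- s) (c *: F i + G i) = c *: \sum_(i <- s) F i + \sum_(i <- s) G i.
Proof. by rewrite big_split /= scaler_sumr. Qed.

Lemma big_flatten_map2 W I J T (s : seq I) (t : I -> seq J) (G : I -> J -> T)
    (F : T -> W) :
  \sum_(i <- flatten [seq [seq G x y | y <- t x] | x <- s]) F i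
  = \sum_(x <- s) \sum_(y <- t x) F (G x y).
Proof. by rewrite big_flatten big_map; apply: eq_bigr => x _; rewrite big_map. Qed.

End Multilinear.

Section Coproduct.
Variables (k : fieldType) (H : lmodType k) (Delta : H -> seq (H * H)).

Lemma sum_Delta_klinear (W : lmodType k) (F : H -> H -> W) :
  (forall (c : k) x y, teq2 (Delta (c *: x + y)) (scale2 c (Delta x) ++ Delta y)) ->
  bilin F -> klinear (fun h => \sum_(p <- Delta h) F p.1 p.2).
Proof.
move=> linDelta bF c x y; rewrite (linDelta c x y W F bF) big_cat big_map scaler_sumr.
by congr (_ + _); apply: eq_bigr => p _; exact: klinearZ (proj1 bF _).
Qed.

Lemma Delta_inv (alpha inv : H -> H) :
  klinear alpha -> cancel alpha inv -> cancel inv alpha ->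
  (forall h, teq2 (Delta (alpha h)) [seq (alpha p.1, alpha p.2) | p <- Delta h]) ->
  forall h, teq2 (Delta (inv h)) [seq (inv q.1, inv q.2) | q <- Delta h].
Proof.
move=> lin_alpha alphaK invK Delta_alpha h W F bF; rewrite big_map.
have lin_inv := can_klinear lin_alpha alphaK invK.
have bFinv : bilin (fun u v => F (inv u) (inv v)).
  by split=> v c a b /=; rewrite lin_inv; [exact: bilinl | exact: bilinr].
have := Delta_alpha (inv h) W _ bFinv; rewrite invK big_map => ->.
by apply: eq_bigr => p _; rewrite !alphaK.
Qed.

End Coproduct.

Section SmashComodule.
Variables (k : fieldType) (H A : lmodType k).
Variables (muH : H -> H -> H) (Delta : H -> seq (H * H)) (alphaH invH : H -> H).
Variables (muA : A -> A -> A) (alphaA invA : A -> A) (act : H -> A -> A).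

Local Notation rho := (smash_rho Delta alphaA).
Local Notation smul := (smash_mul muH Delta muA act invH invA).
Local Notation smul_pure := (smash_mul_pure muH Delta muA act invH invA).
Local Notation tmul := (tens_mul muH Delta muA act invH invA).

Lemma big_smash_rho (W : lmodType k) (F : A * H * H -> W) s :
  \sum_(t <- rho s) F t = \sum_(p <- s) \sum_(t <- rho [:: p]) F t.
Proof.
rewrite /smash_rho big_flatten_map2.
by apply: eq_bigr => p _; rewrite big_flatten_map2 big_seq1.
Qed.

Lemma big_smash_mul (W : lmodType k) (F : A * H -> W) x y :
  \sum_(r <- smul x y) F r
  = \sum_(p <- x) \sum_(q <- y) \sum_(r <- smul_pure p q) F r.
Proof. by rewrite /smash_mul big_flatten big_flatten_map2. Qed.

Lemma big_tens_mul (W : lmodType k) (F : A * H * H -> W) z w :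
  \sum_(r <- tmul z w) F r
  = \sum_(t <- z) \sum_(u <- w) \sum_(r <- tmul [:: t] [:: u]) F r.
Proof.
rewrite /tens_mul big_flatten big_flatten_map2.
by apply: eq_bigr => t _; apply: eq_bigr => u _; rewrite /= cats0.
Qed.

Hypothesis lin_alphaA : klinear alphaA.
Hypothesis lin_Delta :
  forall (c : k) x y, teq2 (Delta (c *: x + y)) (scale2 c (Delta x) ++ Delta y).

Lemma smash_rho_teq x y : teq2 x y -> teq3 (rho x) (rho y).
Proof.
move=> exy W f tf; rewrite /smash_rho !big_flatten_map2.
apply: (exy W (fun a h => \sum_(q <- Delta h) f (alphaA a) q.1 q.2)); split.
- move=> h c a b /=; rewrite lin_alphaA -big_scaleD.
  by apply: eq_bigr => q _; exact: trilin1.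
- by move=> a; apply: sum_Delta_klinear => //; exact: trilin_bilin.
Qed.

Lemma smash_rho_scale c x : teq3 (rho (scale2 c x)) (scale3 c (rho x)).
Proof.
move=> W f tf; rewrite /smash_rho /scale3 /scale2 big_map !big_flatten_map2 big_map.
by apply: eq_bigr => p _; apply: eq_bigr => q _ /=; rewrite klinearZ.
Qed.

Hypothesis Delta_alphaH :
  forall h, teq2 (Delta (alphaH h)) [seq (alphaH p.1, alphaH p.2) | p <- Delta h].

Lemma smash_rho_alpha x :
  teq3 (tens_alpha alphaH alphaA (rho x)) (rho (smash_alpha alphaH alphaA x)).
Proof.
move=> W f tf; rewrite /smash_rho /tens_alpha /smash_alpha.
rewrite big_map !big_flatten_map2 big_map; apply: eq_bigr => p _.
by rewrite (Delta_alphaH p.2 (trilin_bilin _ tf)) big_map.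
Qed.

Hypothesis hom_coassoc : forall h,
  teq3 [seq ((q.1, q.2), alphaH p.2) | p <- Delta h, q <- Delta p.1]
       [seq ((alphaH p.1, q.1), q.2) | p <- Delta h, q <- Delta p.2].

Lemma smash_rho_coassoc x :
  teq4 (coass_lhs Delta alphaH alphaA x) (coass_rhs Delta alphaH alphaA x).
Proof.
move=> W f qf; rewrite /coass_lhs /coass_rhs /smash_rho !big_flatten_map2.
apply: eq_bigr => p _.
under [RHS]eq_bigr => q _ do rewrite big_flatten_map2 big_seq1 /=.
have := hom_coassoc p.2 (quadrilin_trilin (alphaA (alphaA p.1)) qf).
by rewrite !big_flatten_map2 => ->.
Qed.

Hypothesis lin_alphaH : klinear alphaH.
Hypotheses (alphaHK : cancel alphaH invH) (invHK : cancel invH alphaH).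
Hypotheses (alphaAK : cancel alphaA invA) (invAK : cancel invA alphaA).
Hypotheses (bilin_muH : bilin muH) (bilin_muA : bilin muA) (bilin_act : bilin act).
Hypothesis alphaA_muA : forall a a', alphaA (muA a a') = muA (alphaA a) (alphaA a').
Hypothesis alphaA_act : forall h a, alphaA (act h a) = act (alphaH h) (alphaA a).
Hypothesis Delta_muH : forall h h',
  teq2 (Delta (muH h h')) [seq (muH p.1 q.1, muH p.2 q.2) | p <- Delta h, q <- Delta h'].

Lemma Delta_mul_invH h h' :
  teq2 (Delta (muH (invH h) h'))
       [seq (muH (invH p.1) q.1, muH (invH p.2) q.2) | p <- Delta h, q <- Delta h'].
Proof.
move=> W F bF; rewrite (Delta_muH _ _ bF) !big_flatten_map2.
pose G u v := \sum_(q <- Delta h') F (muH u q.1) (muH v q.2).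
have bG : bilin G.
  split=> ? c a b; rewrite /G -big_scaleD; apply: eq_bigr => q _.
  - by rewrite (bilinl _ _ _ _ bilin_muH) (bilinl _ _ _ _ bF).
  - by rewrite (bilinl _ _ _ _ bilin_muH) (bilinr _ _ _ _ bF).
by rewrite (Delta_inv lin_alphaH alphaHK invHK Delta_alphaH h bG) big_map.
Qed.

Lemma smash_rho_mul_pure p q :
  teq3 (rho (smul_pure p q)) (tmul (rho [:: p]) (rho [:: q])).
Proof.
move=> W f tf.
rewrite /smash_rho /tens_mul /smash_mul_pure /= !cats0.
rewrite [LHS]big_flatten_map2 big_map [RHS]big_flatten !big_flatten_map2 big_map /=.
under [RHS]eq_bigr => d _ do rewrite big_map.
under [RHS]eq_bigr => d _ do under eq_bigr => e _ do rewrite !big_map.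
under [RHS]eq_bigr => d _ do rewrite exchange_big /=.
(* Both sides are sums of G over a three-fold coproduct of p.2. *)
pose G u v w := \sum_(e <- Delta q.2) f (muA (alphaA p.1) (act (invH (invH u)) q.1))
                                        (muH (invH v) e.1) (muH (invH w) e.2).
have lin_invH := can_klinear lin_alphaH alphaHK invHK.
have tG : trilin G.
  split=> ? ? c a b; rewrite /G -big_scaleD; apply: eq_bigr => e _; rewrite !lin_invH.
  - by rewrite (bilinl _ _ _ _ bilin_act) (bilinr _ _ _ _ bilin_muA) (trilin1 _ _ _ _ _ tf).
  - by rewrite (bilinl _ _ _ _ bilin_muH) (trilin2 _ _ _ _ _ tf).
  - by rewrite (bilinl _ _ _ _ bilin_muH) (trilin3 _ _ _ _ _ tf).
transitivity (\sum_(d <- Delta p.2) \sum_(j <- Delta d.1) G j.1 j.2 (alphaH d.2));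
  last by apply: eq_bigr => d _; apply: eq_bigr => j _; rewrite /G alphaHK alphaAK.
have := hom_coassoc p.2 tG; rewrite !big_flatten_map2 /= => ->.
apply: eq_bigr => j _; rewrite /G alphaHK alphaA_muA alphaA_act invHK invAK.
by rewrite (Delta_mul_invH _ _ (trilin_bilin _ tf)) big_flatten_map2.
Qed.

Lemma smash_rho_mul x y :
  teq3 (rho (smul x y)) (tmul (rho x) (rho y)).
Proof.
move=> W f tf.
rewrite big_smash_rho big_smash_mul big_tens_mul big_smash_rho.
under [RHS]eq_bigr => p _ do under eq_bigr => t _ do rewrite big_smash_rho.
under [RHS]eq_bigr => p _ do rewrite exchange_big.
apply: eq_bigr => p _; apply: eq_bigr => q _.
rewrite -big_smash_rho -big_tens_mul.
exact: smash_rho_mul_pure.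
Qed.

End SmashComodule.

Theorem proposition3p6 (k : fieldType) (H A : lmodType k)
  (muH : H -> H -> H) (Delta : H -> seq (H * H)) (alphaH : H -> H)
  (muA : A -> A -> A) (alphaA : A -> A) (act : H -> A -> A)
  (invH : H -> H) (invA : A -> A) :
  hom_bialgebra muH Delta alphaH ->
  module_hom_algebra muH Delta alphaH muA alphaA act ->
  cancel alphaH invH -> cancel invH alphaH ->
  cancel alphaA invA -> cancel invA alphaA ->
  let rho := smash_rho Delta alphaA in
  [/\ (* rho is a well-defined linear map A # H -> (A # H) (x) H *)
      (forall x y : seq (A * H), teq2 x y -> teq3 (rho x) (rho y)),
      (forall (c : k) (x : seq (A * H)), teq3 (rho (scale2 c x)) (scale3 c (rho x))),
      (* (alpha_{A#H} (x) alpha_H) o rho = rho o alpha_{A#H}; this is also the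
         compatibility of rho with the structure maps (Hom-algebra morphism) *)
      (forall x, teq3 (tens_alpha alphaH alphaA (rho x))
                      (rho (smash_alpha alphaH alphaA x))),
      (* (alpha_{A#H} (x) Delta_H) o rho = (rho (x) alpha_H) o rho *)
      (forall x, teq4 (coass_lhs Delta alphaH alphaA x)
                      (coass_rhs Delta alphaH alphaA x)) &
      (* rho is multiplicative *)
      (forall x y, teq3 (rho (smash_mul muH Delta muA act invH invA x y))
                        (tens_mul muH Delta muA act invH invA (rho x) (rho y)))].
Proof.
move=> [[bilin_muH lin_alphaH _ _] lin_Delta hom_coassoc Delta_muH Delta_alphaH].
move=> [[bilin_muA lin_alphaA alphaA_muA _] bilin_act alphaA_act _ _].
move=> alphaHK invHK alphaAK invAK rho; split.
- exact: smash_rho_teq.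
- exact: smash_rho_scale.
- exact: smash_rho_alpha.
- exact: smash_rho_coassoc.
- exact: smash_rho_mul.
Qed.
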